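(* Consider a market with $N$ players and $K\ge N$ arms in which every player has a strict preference order over arms and every arm has a strict preference order over players, and run the player-proposing Gale–Shapley (deferred acceptance) algorithm. Then at most $N$ proposals are made per player before termination. Consequently, each player's optimal stable match (its match in the player-optimal stable matching) is among its top $N$ preferred arms.
   Context: In player-proposing Gale–Shapley, each currently unmatched player proposes to its most preferred arm it has not yet proposed to; each arm tentatively holds the best proposer it has received (according to its strict preferences) and rejects the others; the algorithm terminates when every player is tentatively matched (or has exhausted its list), and outputs the player-optimal stable matching. *)

From mathcomp Require Import all_boot all_fingroup.
Set Implicit Arguments. Unset Strict Implicit. Unset Printing Implicit Defensive.

(* Player preferences: rankP i : {perm 'I_K}, rankP i a = rank of arm a in
   player i's strict order (0 = most preferred).
   Arm preferences: rankA a : {perm 'I_N}, rankA a j = rank of player j in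
   arm a's strict order (0 = most preferred). *)

Section GS.
Variables (N K : nat).
Variable rankP : 'I_N -> {perm 'I_K}.
Variable rankA : 'I_K -> {perm 'I_N}.

(* State of the (simultaneous-round) player-proposing Gale-Shapley algorithm:
   nprop i = number of proposals made so far by player i (so i has proposed
   exactly to its arms of rank 0 .. nprop i - 1);
   hold a = player tentatively held by arm a (if any). *)
Record gs_state := GSState { nprop : 'I_N -> nat; hold : 'I_K -> option 'I_N }.

Definition gs_init : gs_state := GSState (fun _ => 0) (fun _ => None).

Definition gs_free (s : gs_state) (i : 'I_N) : bool :=
  ~~ [exists a, hold s a == Some i].

(* in the current round, player j proposes to arm a: j is unmatched and a is
   its most preferred arm not yet proposed to (if j's list is exhausted, no
   arm has rank nprop j, so j makes no proposal) *)
Definition gs_proposes (s : gs_state) (j : 'I_N) (a : 'I_K) : bool :=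
  gs_free s j && (rankP j a == nprop s j :> nat).

Definition gs_cand (s : gs_state) (a : 'I_K) (j : 'I_N) : bool :=
  (hold s a == Some j) || gs_proposes s j a.

Definition gs_step (s : gs_state) : gs_state :=
  GSState
    (fun i => if [exists a, gs_proposes s i a] then (nprop s i).+1 else nprop s i)
    (fun a => [pick j | gs_cand s a j &&
                        [forall j', gs_cand s a j' ==> (rankA a j <= rankA a j')]]).

(* state after n rounds (once terminated, rounds change nothing) *)
Definition gs_run (n : nat) : gs_state := iter n gs_step gs_init.

Definition is_matching (mu : 'I_N -> option 'I_K) : Prop :=
  forall i j a, mu i = Some a -> mu j = Some a -> i = j.

Definition blocking (mu : 'I_N -> option 'I_K) (i : 'I_N) (a : 'I_K) : Prop :=
  (mu i = None \/ exists b, mu i = Some b /\ rankP i a < rankP i b) /\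
  (forall j, mu j = Some a -> rankA a i < rankA a j).

Definition stable (mu : 'I_N -> option 'I_K) : Prop :=
  is_matching mu /\ forall i a, ~ blocking mu i a.

Definition weakly_prefers (i : 'I_N) (o1 o2 : option 'I_K) : bool :=
  match o1, o2 with
  | Some a, Some b => rankP i a <= rankP i b
  | Some _, None => true
  | None, None => true
  | None, Some _ => false
  end.

Definition player_optimal_stable (mu : 'I_N -> option 'I_K) : Prop :=
  stable mu /\ forall nu, stable nu -> forall i, weakly_prefers i (mu i) (nu i).

End GS.

(* Once an arm has received a proposal it holds some player for the rest of
   the run, and distinct arms hold distinct players.  A player that had made
   N+1 proposals would thus keep N+1 arms occupied by N+1 distinct players.
   Similarly, if in a stable matching player i is not matched within its top
   N arms, each of these arms must be matched (otherwise it blocks with i),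
   and not to i: N distinct partners among the N-1 other players. *)
From mathcomp Require Import all_boot all_fingroup.
Set Implicit Arguments. Unset Strict Implicit. Unset Printing Implicit Defensive.

Lemma card_le_partial_inj (aT rT : finType) (f : aT -> option rT) (A : {set aT}) :
    (forall a b y, f a = Some y -> f b = Some y -> a = b) ->
    {in A, forall a, f a != None} -> #|A| <= #|rT|.
Proof.
move=> f_inj f_some.
have inj_in : {in A &, injective f}.
  move=> a b /f_some; case Ea: (f a) => [y|] // _ _ Eb.
  exact: f_inj Ea (esym Eb).
rewrite -(card_in_imset inj_in) -[#|rT|]/(#|rT|.+1.-1) -card_option -(cardsC1 None).
apply/subset_leq_card/subsetP => _ /imsetP [a Aa ->].
by rewrite !inE f_some.
Qed.

Lemma card_rank_lt (K n : nat) (p : {perm 'I_K}) :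
  n <= K -> #|[set b | p b < n]| = n.
Proof.
move=> lenK.
have -> : [set b | p b < n] = p @^-1: (widen_ord lenK @: setT).
  apply/setP => b; rewrite !inE.
  apply/idP/imsetP => [lt_pb_n | [k _ ->]]; last exact: (ltn_ord k).
  by exists (Ordinal lt_pb_n) => //; apply: val_inj.
rewrite (card_preimset _ (@perm_inj _ p)) card_imset ?cardsT ?card_ord //.
by move=> k k' /(congr1 val) /= /val_inj.
Qed.

Section GaleShapley.
Variables (N K : nat).
Variable rankP : 'I_N -> {perm 'I_K}.
Variable rankA : 'I_K -> {perm 'I_N}.

Local Notation step := (gs_step rankP rankA).
Local Notation proposes := (gs_proposes rankP).
Local Notation cand := (gs_cand rankP).

Lemma hold_step_cand s a j : hold (step s) a = Some j -> cand s a j.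
Proof. by rewrite /gs_step /=; case: pickP => // k /andP [cand_k _] [<-]. Qed.

Lemma cand_hold_step s a j : cand s a j -> hold (step s) a != None.
Proof.
move=> cand_j; rewrite /gs_step /=; case: pickP => // no_best.
have [k cand_k k_min] := arg_minnP (fun j => rankA a j) cand_j.
have /negP [] := no_best k; rewrite cand_k /=.
by apply/forallP => j'; apply/implyP => /k_min.
Qed.

Lemma hold_step_held s a : hold s a != None -> hold (step s) a != None.
Proof.
case Ea: (hold s a) => [j|] // _.
by apply: (@cand_hold_step _ _ j); rewrite /gs_cand Ea eqxx.
Qed.

Lemma proposes_rank s j a : proposes s j a -> rankP j a = nprop s j :> nat.
Proof. by case/andP => _ /eqP. Qed.

Lemma proposes_uniq s j a b : proposes s j a -> proposes s j b -> a = b.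
Proof.
move=> /proposes_rank ra /proposes_rank rb.
by apply: (@perm_inj _ (rankP j)); apply: val_inj; rewrite /= ra rb.
Qed.

Lemma proposes_unheld s j a b : proposes s j a -> hold s b != Some j.
Proof. by case/andP => /existsPn /(_ b). Qed.

Record gs_inv (s : gs_state N K) : Prop := GSInv {
  hold_inj : forall a b j, hold s a = Some j -> hold s b = Some j -> a = b;
  nprop_le_K : forall i, nprop s i <= K;
  proposed_held : forall i b, rankP i b < nprop s i -> hold s b != None }.

Lemma gs_inv_init : gs_inv (gs_init N K).
Proof. by split => //= i b; rewrite ltn0. Qed.

Lemma gs_inv_step s : gs_inv s -> gs_inv (step s).
Proof.
case=> hold_inj_s nprop_le_s proposed_held_s; split.
- move=> a b j /hold_step_cand /orP [/eqP Ea | pa] /hold_step_cand /orP [/eqP Eb | pb].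
  + exact: hold_inj_s Ea Eb.
  + by have := proposes_unheld a pb; rewrite Ea eqxx.
  + by have := proposes_unheld b pa; rewrite Eb eqxx.
  + exact: proposes_uniq pa pb.
- move=> i /=; case: existsP => [[a /proposes_rank <-] | _] //.
- move=> i b /=; case: existsP => [[a pa] | _] lt_b; last first.
    exact: hold_step_held (proposed_held_s _ _ lt_b).
  move: lt_b; rewrite ltnS leq_eqVlt -(proposes_rank pa) => /orP [/eqP rb | lt_b].
    have -> : b = a by apply: (@perm_inj _ (rankP i)); apply: val_inj.
    by apply: (@cand_hold_step _ _ i); rewrite /gs_cand pa orbT.
  by apply/hold_step_held/(proposed_held_s i); rewrite -(proposes_rank pa).
Qed.

Lemma gs_inv_run n : gs_inv (gs_run rankP rankA n).
Proof.
elim: n => [|n IH]; first exact: gs_inv_init.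
by rewrite /gs_run iterS; apply: gs_inv_step.
Qed.

Lemma nprop_le_N s i : gs_inv s -> nprop s i <= N.
Proof.
case=> hold_inj_s nprop_le_s proposed_held_s.
rewrite -(card_rank_lt (rankP i) (nprop_le_s i)) -{2}(card_ord N).
by apply: card_le_partial_inj hold_inj_s _ => b; rewrite inE; apply: proposed_held_s.
Qed.

Lemma stable_preferred_arm_matched mu i b :
    stable rankP rankA mu ->
    (mu i = None \/ exists c, mu i = Some c /\ rankP i b < rankP i c) ->
  exists2 j, mu j = Some b & j != i.
Proof.
move=> [_ unblocked] i_prefers_b.
case: (pickP (fun j => mu j == Some b)) => [j /eqP mu_j | unmatched].
  exists j => //; apply: contraPneq i_prefers_b => <-.
  by rewrite mu_j => -[/eqP | [c [[<-]]]]; rewrite ?ltnn.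
by case: (unblocked i b); split => // j mu_j; have := unmatched j; rewrite mu_j eqxx.
Qed.

Lemma stable_match_top_N mu i :
    N <= K -> stable rankP rankA mu ->
  exists a, mu i = Some a /\ rankP i a < N.
Proof.
move=> leNK stable_mu.
case: (pickP (fun a => (mu i == Some a) && (rankP i a < N))).
  by move=> a /andP [/eqP mu_i top_a]; exists a.
move=> not_top.
have prefers_top b : rankP i b < N ->
    mu i = None \/ exists c, mu i = Some c /\ rankP i b < rankP i c.
  move=> top_b; case mu_i: (mu i) => [c|]; [right; exists c | by left].
  move/negbT: (not_top c); rewrite mu_i eqxx -leqNgt.
  by move=> /(leq_trans top_b).
have top_taken : Some @: [set b | rankP i b < N] \subset mu @: [set~ i].
  apply/subsetP => x /imsetP [b]; rewrite inE => /prefers_top.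
  case/(stable_preferred_arm_matched stable_mu) => j mu_j j_neq_i ->.
  by apply/imsetP; exists j; rewrite ?inE.
have := leq_trans (subset_leq_card top_taken) (leq_imset_card _ _).
rewrite card_imset; last exact: Some_inj.
rewrite card_rank_lt // cardsC1 card_ord leqNgt ltn_predL.
by rewrite (leq_ltn_trans (leq0n i) (ltn_ord i)).
Qed.
End GaleShapley.

Theorem lemmaB3 (N K : nat) (rankP : 'I_N -> {perm 'I_K})
    (rankA : 'I_K -> {perm 'I_N}) (hNK : N <= K) :
  (forall (n : nat) (i : 'I_N), nprop (gs_run rankP rankA n) i <= N) /\
  (forall mu : 'I_N -> option 'I_K, player_optimal_stable rankP rankA mu ->
     forall i : 'I_N, exists a : 'I_K, mu i = Some a /\ rankP i a < N).
Proof.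
split; first by move=> n i; exact: nprop_le_N (gs_inv_run rankP rankA n).
by move=> mu [stable_mu _] i; exact: stable_match_top_N hNK stable_mu.
Qed.
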